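(* For $1\le p\le n$ let $M_{np}=\chi_n(\pi,p)$ where $\pi$ is uniform on $\mathfrak S_n$, and $\phi_{np}(u)=\sum_{l\ge0}\mathbb P(M_{np}=l)u^l$. Then $$\phi_{np}(u)=\frac{p}{n}\phi_{pp}(u)+\Bigl(1-\frac pn\Bigr)u,\qquad \phi_{nn}(u)=\frac un\Bigl[1+\sum_{p=1}^{n-1}\phi_{n-1,p}(u)\Bigr]\ (n\ge2),$$ and explicitly $$\phi_{np}(u)=\frac{n-p+1}{n}\,u+\frac pn\,\frac{u^2}{2-u}\Bigl[1-\frac{u(u+1)\cdots(u+p-2)}{p!}\Bigr],$$ where the product $u(u+1)\cdots(u+p-2)$ is empty (equal to $1$) when $p=1$.
   Context: $[n]=\{1,\dots,n\}$, $\mathfrak S_n$ the symmetric group on $[n]$, right action $i\pi$, products composed left to right; $\tau(i,j)$ the transposition exchanging $i,j$ ($\tau(n,n)$ the identity). For $\pi\in\mathfrak S_n$ let $q(\pi)=n\pi^{-1}$, and for $n\ge2$ let $\downarrow\pi\in\mathfrak S_{n-1}$ be the restriction to $[n-1]$ of $\tau(n,q(\pi))\pi$. The ''number of moves'' function $\chi_n(\pi,p)$, $\pi\in\mathfrak S_n$, $p\in[n]$, is defined recursively: $\chi_1(\mathrm{id},1)=1$; for $n\ge2$, with $q=q(\pi)$: $\chi_n(\pi,p)=\chi_{n-1}(\downarrow\pi,p)$ if $p\ne n,p\ne q$; $=1+\chi_{n-1}(\downarrow\pi,q)$ if $p=n\ne q$; $=1$ if $p=q\ne n$; $=1$ if $p=q=n$.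 *)

From mathcomp Require Import all_boot all_order all_algebra all_fingroup.
Set Implicit Arguments. Unset Strict Implicit. Unset Printing Implicit Defensive.
Import Order.TTheory GRing.Theory Num.Theory.

(* A permutation of [n] = {1..n} is encoded as a function nat -> nat whose
   values on 1..n matter.  [chi n f p] is the paper's chi_n(pi,p) where
   i pi = f i for i in [n] (right action). *)

Definition qpi (n : nat) (f : nat -> nat) : nat :=
  (find (fun i => f i == n) (iota 1 n)).+1.

Definition tau (a b i : nat) : nat :=
  if i == a then b else if i == b then a else i.

(* down pi = restriction of tau(n,q) pi (products left to right:
   i (tau pi) = (i tau) pi). *)
Definition down (n : nat) (f : nat -> nat) : nat -> nat :=
  fun i => f (tau n (qpi n f) i).

Fixpoint chi (n : nat) (f : nat -> nat) (p : nat) {struct n} : nat :=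
  match n with
  | 0 => 0
  | n'.+1 =>
      if n' is 0 then 1
      else
      let q := qpi n f in
      if (p != n) && (p != q) then chi n' (down n f) p
      else if (p == n) && (p != q) then (chi n' (down n f) q).+1
      else 1
  end.

(* 1-based view of pi : 'S_n (i in [n] corresponds to the ordinal i-1). *)
Definition perm_fun (n : nat) (pi : 'S_n) : nat -> nat :=
  fun i => match (insub i.-1 : option 'I_n) with
           | Some j => (pi j).+1
           | None => i
           end.

Definition chiP (n : nat) (pi : 'S_n) (p : nat) : nat := chi n (perm_fun pi) p.

Local Open Scope ring_scope.

Definition probM (R : numFieldType) (n p l : nat) : R :=
  #|[set pi : 'S_n | chiP pi p == l]|%:R / (n`!)%:R.

(* phi_{np}(u) = sum_{l>=0} P(M_{np}=l) u^l ; M_{np} takes values in 0..n,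
   so the sum over l <= n is the full series. *)
Definition phi (R : numFieldType) (n p : nat) (u : R) : R :=
  \sum_(l < n.+1) probM R n p l * u ^+ l.

From mathcomp Require Import all_boot all_order all_algebra all_fingroup.
From mathcomp Require Import zify ring.
Set Implicit Arguments. Unset Strict Implicit. Unset Printing Implicit Defensive.
Import Order.TTheory GRing.Theory Num.Theory.

(* The map pi |-> (q(pi), down pi) is a bijection S_n -> [n] x S_(n-1), whose
   inverse sends (q, s) to tau(n, q) s.  Summing u ^ chi_n(pi, p) over S_n along
   this bijection gives, for p < n, one block q = p where chi = 1 and n - 1
   blocks reproducing the sum for S_(n-1); for p = n, the block q = n where
   chi = 1 and blocks q < n contributing u times the sum for (n-1, q).  After
   normalisation by n! these are the two recurrences.  The closed form then
   follows by strong induction on the diagonal, using the hockey-stick identity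
   sum_(k <= m) u(u+1)...(u+k-1)/k! = (u+1)(u+2)...(u+m)/m!. *)

Lemma qpi_ext n f g : (forall i, 1 <= i <= n -> f i = g i) -> qpi n f = qpi n g.
Proof.
move=> efg; rewrite /qpi; congr _.+1; apply: eq_in_find => i.
by rewrite mem_iota => /andP[i1 iN]; rewrite efg //; apply/andP; lia.
Qed.

Lemma qpi_le n f : qpi n f <= n.+1.
Proof.
by rewrite /qpi; have := find_size (fun i => f i == n) (iota 1 n); rewrite size_iota.
Qed.

Lemma qpi_first n f q : 1 <= q <= n -> f q = n ->
  (forall i, 1 <= i < q -> f i != n) -> qpi n f = q.
Proof.
move=> /andP[q1 qn] fq before_q; rewrite /qpi.
have -> : iota 1 n = iota 1 q.-1 ++ q :: iota q.+1 (n - q).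
  have -> : n = q.-1 + (n - q).+1 by lia.
  by rewrite iotaD /=; congr (_ ++ _ :: iota _ _); lia.
rewrite find_cat /= fq eqxx; case: ifP => [/hasP[i]|_].
  by rewrite mem_iota => i_lt /=; rewrite (negbTE (before_q i _)) //; lia.
by rewrite size_iota addn0; lia.
Qed.

Lemma chiSS n f p : chi n.+2 f p =
  if (p != n.+2) && (p != qpi n.+2 f) then chi n.+1 (down n.+2 f) p
  else if (p == n.+2) && (p != qpi n.+2 f)
  then (chi n.+1 (down n.+2 f) (qpi n.+2 f)).+1
  else 1.
Proof. by []. Qed.

Lemma chi_ext n f g p : (forall i, 1 <= i <= n -> f i = g i) ->
  chi n f p = chi n g p.
Proof.
elim: n f g p => [//|[|n] IHn] f g p efg //.
have edown i : 1 <= i <= n.+1 -> down n.+2 f i = down n.+2 g i.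
  move=> i_in; rewrite /down -(qpi_ext efg) efg // /tau.
  have := qpi_le n.+2 f; case: eqP => [|_]; first lia.
  by case: eqP; lia.
by rewrite !chiSS -(qpi_ext efg) !(IHn _ _ _ edown).
Qed.

Lemma chi_le n f p : chi n f p <= n.
Proof.
elim: n f p => [//|[|n] IHn] f p //.
rewrite chiSS; case: ifP => _; first exact: leqW.
by case: ifP => // _; rewrite ltnS.
Qed.

Lemma perm_funE n (pi : 'S_n) (k : 'I_n) i : i = k.+1 -> perm_fun pi i = (pi k).+1.
Proof. by move=> ->; rewrite /perm_fun /= valK. Qed.

Definition up_perm n (j : 'I_n.+1) (s : 'S_n) : 'S_n.+1 :=
  tperm ord_max j * lift_perm ord_max ord_max s.

Lemma up_permE n (j : 'I_n.+1) (s : 'S_n) x :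
  up_perm j s x = lift_perm ord_max ord_max s (tperm ord_max j x).
Proof. by rewrite permM. Qed.

Lemma up_perm_j n j (s : 'S_n) : up_perm j s j = ord_max.
Proof. by rewrite up_permE tpermR lift_perm_id. Qed.

Lemma up_perm_lift n (j : 'I_n.+1) (s : 'S_n) (k : 'I_n) : val j != val k ->
  up_perm j s (lift ord_max k) = lift ord_max (s k).
Proof.
move=> jk; rewrite up_permE tpermD ?lift_perm_lift ?neq_lift //.
by apply: contra jk => /eqP ->; apply/eqP; exact: lift_max.
Qed.

Lemma up_perm_max n (j : 'I_n.+1) (s : 'S_n) (k : 'I_n) : val j = val k ->
  up_perm j s ord_max = lift ord_max (s k).
Proof.
move=> jk; have -> : j = lift ord_max k by apply: val_inj; rewrite jk; exact/esym/lift_max.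
by rewrite up_permE tpermL lift_perm_lift.
Qed.

Lemma qpi_up_perm n j (s : 'S_n) : qpi n.+1 (perm_fun (up_perm j s)) = j.+1.
Proof.
apply: qpi_first; first by rewrite ltn_ord.
  by rewrite (perm_funE _ (k := j)) // up_perm_j.
move=> i /andP[i1 ij]; have ik : i.-1 < n.+1 by have := ltn_ord j; lia.
rewrite (perm_funE _ (k := Ordinal ik)) /=; last lia.
rewrite eqSS; apply/eqP => e.
have : up_perm j s (Ordinal ik) = up_perm j s j by apply: val_inj; rewrite up_perm_j.
by move/perm_inj/(congr1 val) => /=; lia.
Qed.

Lemma down_up_perm n j (s : 'S_n) i : 1 <= i <= n ->
  down n.+1 (perm_fun (up_perm j s)) i = perm_fun s i.
Proof.
move=> /andP[i1 iN]; have ik : i.-1 < n by lia.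
rewrite /down qpi_up_perm (perm_funE s (k := Ordinal ik)) /=; last lia.
rewrite /tau; case: eqP => [|_]; first lia.
case: eqP => [ij|ij].
  rewrite (perm_funE _ (k := ord_max)) // (@up_perm_max n j s (Ordinal ik)) /=; last lia.
  by rewrite /bump leqNgt ltn_ord.
rewrite (perm_funE _ (k := lift ord_max (Ordinal ik))); last first.
  by rewrite /= /bump leqNgt ik; lia.
by rewrite up_perm_lift ?lift_max //=; apply/eqP; lia.
Qed.

Lemma chiP_up_perm n j (s : 'S_n) p : 1 <= n ->
  chiP (up_perm j s) p =
  if (p != n.+1) && (p != j.+1) then chiP s p
  else if (p == n.+1) && (p != j.+1) then (chiP s j.+1).+1 else 1.
Proof.
case: n j s => [//|n] j s _.
rewrite /chiP chiSS qpi_up_perm.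
by rewrite !(@chi_ext n.+1 _ (perm_fun s)) // => i; apply: down_up_perm.
Qed.

Lemma up_perm_bij n : bijective (fun x : 'I_n.+1 * 'S_n => up_perm x.1 x.2).
Proof.
apply: inj_card_bij => [[j s] [j' s'] /= e|]; last first.
  by rewrite card_prod card_ord !card_Sn factS.
have ej : j = j' by apply: (@perm_inj _ (up_perm j s)); rewrite up_perm_j e up_perm_j.
subst j'; congr (_, _); apply/permP => k.
have := congr1 (fun t : 'S_n.+1 => t (tperm ord_max j (lift ord_max k))) e.
by rewrite /= !up_permE tpermK !lift_perm_lift; exact: lift_inj.
Qed.

Local Open Scope ring_scope.

Section GeneratingFunction.
Variable R : numFieldType.
Implicit Types (u : R).

Definition chi_sum n p u := \sum_(pi : 'S_n) u ^+ chiP pi p.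

Lemma natr_fact_neq0 n : n`!%:R != 0 :> R.
Proof. by rewrite pnatr_eq0 -lt0n fact_gt0. Qed.

Lemma natrS_neq0 n : n.+1%:R != 0 :> R.
Proof. by rewrite pnatr_eq0. Qed.

Lemma phiE n p u : phi n p u = chi_sum n p u / n`!%:R.
Proof.
rewrite /phi /chi_sum /probM.
have chi_ord (pi : 'S_n) : (chiP pi p < n.+1)%N by rewrite ltnS chi_le.
have -> : \sum_(pi : 'S_n) u ^+ chiP pi p =
    \sum_(pi : 'S_n) \sum_(l < n.+1) (if chiP pi p == l then u ^+ l else 0).
  apply: eq_bigr => pi _; by rewrite -big_mkcond (big_pred1 (Ordinal (chi_ord pi))).
rewrite exchange_big /= mulr_suml; apply: eq_bigr => l _.
by rewrite -big_mkcond /= sumr_const cardsE -mulr_natr; ring.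
Qed.

Lemma chi_sum_split n p u :
  chi_sum n.+1 p u = \sum_(j < n.+1) \sum_(s : 'S_n) u ^+ chiP (up_perm j s) p.
Proof.
rewrite /chi_sum (reindex (fun x : 'I_n.+1 * 'S_n => up_perm x.1 x.2)) /=.
  by rewrite pair_big.
exact/onW_bij/up_perm_bij.
Qed.

Lemma chi_sum_rec n p u : (1 <= n)%N -> (1 <= p <= n)%N ->
  chi_sum n.+1 p u = n`!%:R * u + n%:R * chi_sum n p u.
Proof.
move=> n1 /andP[p1 pn]; have pj : (p.-1 < n.+1)%N by lia.
rewrite chi_sum_split (bigD1 (Ordinal pj)) //=; congr (_ + _).
  rewrite mulr_natl -card_Sn -sumr_const; apply: eq_bigr => s _.
  by rewrite chiP_up_perm // prednK // eqxx !andbF.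
transitivity (\sum_(j < n.+1 | j != Ordinal pj) chi_sum n p u).
  2: by rewrite sumr_const cardC1 card_ord mulr_natl.
apply: eq_bigr => j j_ne; apply: eq_bigr => s _; rewrite chiP_up_perm //.
have -> : (p != n.+1) = true by apply/eqP; lia.
suff -> : (p != j.+1) = true by [].
by apply: contraNT j_ne => /eqP e; apply/eqP/val_inj => /=; lia.
Qed.

Lemma chi_sum_rec_diag n u : (1 <= n)%N ->
  chi_sum n.+1 n.+1 u = n`!%:R * u + u * \sum_(j < n) chi_sum n j.+1 u.
Proof.
move=> n1; rewrite chi_sum_split big_ord_recr /= addrC; congr (_ + _).
  rewrite mulr_natl -card_Sn -sumr_const; apply: eq_bigr => s _.
  by rewrite chiP_up_perm //= eqxx.
rewrite mulr_sumr; apply: eq_bigr => j _; rewrite mulr_sumr; apply: eq_bigr => s _.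
have j_ne : (n.+1 != j.+1) = true by apply/eqP; have := ltn_ord j; lia.
by rewrite chiP_up_perm // eqxx j_ne /= exprS.
Qed.

Lemma phi11 u : phi 1 1 u = u.
Proof.
rewrite phiE divr1 /chi_sum (eq_bigr (fun _ => u)) //.
by rewrite sumr_const card_Sn.
Qed.

Lemma phiS n p u : (1 <= n)%N -> (1 <= p <= n)%N ->
  phi n.+1 p u = u / n.+1%:R + n%:R / n.+1%:R * phi n p u.
Proof.
move=> n1 pn; rewrite !phiE chi_sum_rec // factS natrM.
by field; rewrite natr_fact_neq0 nat1r natrS_neq0.
Qed.

Lemma phi_scale n p u : (1 <= p <= n)%N ->
  phi n p u = p%:R / n%:R * phi p p u + (1 - p%:R / n%:R) * u.
Proof.
move=> /andP[p1]; elim: n => [|n IHn] pn; first lia.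
case: (ltnP p n.+1) => [p_lt|p_ge]; last first.
  have -> : p = n.+1 by lia.
  by rewrite divff ?natrS_neq0 // mul1r subrr mul0r addr0.
have n_neq0 : n%:R != 0 :> R by rewrite pnatr_eq0; lia.
rewrite phiS ?p1 //; try lia.
rewrite IHn; last lia.
by field; rewrite n_neq0 nat1r natrS_neq0.
Qed.

Lemma phi_diag n u : (1 <= n)%N ->
  phi n.+1 n.+1 u = u / n.+1%:R * (1 + \sum_(1 <= p < n.+1) phi n p u).
Proof.
move=> n1; rewrite !phiE chi_sum_rec_diag // factS natrM big_add1 /= big_mkord.
under [X in _ = _ * (1 + X)]eq_bigr do rewrite phiE.
by rewrite -mulr_suml; field; rewrite natr_fact_neq0 nat1r natrS_neq0.
Qed.

Definition rising u k := \prod_(0 <= i < k) (u + i%:R).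

Lemma risingSr u k : rising u k.+1 = rising u k * (u + k%:R).
Proof. exact: big_nat_recr. Qed.

Lemma risingSl u k : rising u k.+1 = u * rising (u + 1) k.
Proof.
rewrite /rising big_nat_recl // addr0; congr (_ * _).
by apply: eq_bigr => i _; rewrite -nat1r addrA.
Qed.

Lemma sum_rising_fact u m :
  \sum_(0 <= k < m.+1) rising u k / k`!%:R = rising (u + 1) m / m`!%:R.
Proof.
elim: m => [|m IHm]; first by rewrite big_nat1 /rising !big_geq.
rewrite big_nat_recr //= IHm risingSl risingSr factS natrM.
by field; rewrite natr_fact_neq0 nat1r natrS_neq0.
Qed.

Definition phi_closed n p u :=
  (n - p).+1%:R / n%:R * u
  + p%:R / n%:R * (u ^+ 2 / (2 - u)) * (1 - rising u p.-1 / p`!%:R).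

Lemma phi_closed_scale n p u : (1 <= p <= n)%N ->
  phi_closed n p u = p%:R / n%:R * phi_closed p p u + (1 - p%:R / n%:R) * u.
Proof.
move=> /andP[p1 pn]; rewrite /phi_closed subnn.
have n_neq0 : n%:R != 0 :> R by rewrite pnatr_eq0; lia.
have p_neq0 : p%:R != 0 :> R by rewrite pnatr_eq0; lia.
have -> : (n - p).+1 = (n.+1 - p)%N by lia.
rewrite natrB; last lia.
move: (u ^+ 2 / _) (rising _ _ / _) => w r.
by field; rewrite n_neq0 p_neq0.
Qed.

Lemma sum_phi_closed m u :
  \sum_(1 <= q < m.+2) phi_closed m.+1 q u =
  m.+2%:R / 2 * (u + u ^+ 2 / (2 - u))
  - u ^+ 2 / (2 - u) * (rising (u + 1) m / m.+1`!%:R).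
Proof.
set w := u ^+ 2 / (2 - u).
transitivity (\sum_(1 <= q < m.+2) (u / m.+1%:R * (m.+1 - q).+1%:R
    + w / m.+1%:R * q%:R - w / m.+1%:R * (rising u q.-1 / q.-1`!%:R))).
  apply: eq_big_nat => q /andP[q1 _]; rewrite /phi_closed -/w -(prednK q1) factS natrM /=.
  by field; rewrite natr_fact_neq0 !nat1r !natrS_neq0.
rewrite sumrB -mulr_sumr [X in _ - _ * X]big_add1 /=.
rewrite sum_rising_fact big_split /= -!mulr_sumr -!natr_sum.
have -> : (\sum_(1 <= q < m.+2) (m.+1 - q).+1 = \sum_(1 <= q < m.+2) q)%N.
  by rewrite big_nat_rev; apply: eq_big_nat => q /andP[q1 qm]; lia.
have gauss : (\sum_(1 <= q < m.+2) q)%:R = m.+1%:R * m.+2%:R / 2 :> R.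
  have gauss_nat k : ((\sum_(1 <= q < k.+1) q) * 2 = k * k.+1)%N.
    by elim: k => [|k IHk]; [rewrite big_geq | rewrite big_nat_recr //= mulnDl IHk; lia].
  by rewrite -!natrM -gauss_nat natrM mulfK ?pnatr_eq0.
rewrite gauss factS natrM.
by field; rewrite natr_fact_neq0 nat1r natrS_neq0.
Qed.

Lemma phi_diag_closed p u : (1 <= p)%N -> u != 2 -> phi p p u = phi_closed p p u.
Proof.
move=> + u_neq2; have u2 : 2 - u != 0 by rewrite subr_eq0 eq_sym.
elim/ltn_ind: p => -[//|[|m]] IHp _.
  by rewrite phi11 /phi_closed /= /rising big_geq // !divr1 subrr mulr0 addr0 mul1r.
have phi_off q : (1 <= q < m.+2)%N -> phi m.+1 q u = phi_closed m.+1 q u.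
  by move=> q_in; rewrite phi_scale // phi_closed_scale // IHp //; lia.
rewrite phi_diag // (eq_big_nat _ _ phi_off) sum_phi_closed.
rewrite /phi_closed subnn risingSl (factS m.+1) (factS m) !natrM.
by field; rewrite u2 natr_fact_neq0 nat1r natrS_neq0 -natrD pnatr_eq0.
Qed.

Lemma phi_closedE n p u : (1 <= p <= n)%N -> u != 2 -> phi n p u = phi_closed n p u.
Proof.
move=> p_in u_neq2; have /andP[p1 _] := p_in.
by rewrite phi_scale // phi_diag_closed // -phi_closed_scale.
Qed.

End GeneratingFunction.

Unset Implicit Arguments.

Theorem mainTheorem6 (R : numFieldType) :
  (forall (n p : nat) (u : R), (1 <= p <= n)%N ->
     phi n p u = p%:R / n%:R * phi p p u + (1 - p%:R / n%:R) * u)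
  /\ (forall (n : nat) (u : R), (2 <= n)%N ->
     phi n n u = u / n%:R * (1 + \sum_(1 <= p < n) phi n.-1 p u))
  /\ (forall (n p : nat) (u : R), (1 <= p <= n)%N -> u != 2 ->
     phi n p u =
       (n - p).+1%:R / n%:R * u
       + p%:R / n%:R * (u ^+ 2 / (2 - u))
         * (1 - (\prod_(0 <= k < p.-1) (u + k%:R)) / (p`!)%:R)).
Proof.
split; first exact: phi_scale.
split; first by case=> [|[|n]] // u _; exact: phi_diag.
exact: phi_closedE.
Qed.
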